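(* Consider a human–algorithm system (as defined in the context) with $A\le H$, and let $s$ be a weighting function for $c$. Write $s_i=s(a_i,h_i)$, $\delta_{ai}=a_i-A$ and $\delta_{hi}=h_i-H$. Then the system exhibits complementarity whenever $$(H-A)\sum_{i=1}^N p_i\,s_i<\sum_{i=1}^N p_i\,s_i\,(\delta_{ai}-\delta_{hi}).$$ Equivalently, viewing $s_i$ and $\delta_{ai}-\delta_{hi}$ as random variables on $\{1,\dots,N\}$ with probability mass $p_i$ at $i$, the condition reads $(H-A)\,\mathbb{E}[s_i]<\mathrm{Cov}\big(s_i,\ \delta_{ai}-\delta_{hi}\big)$.
   Context: A human–algorithm system consists of: an integer $N\ge1$ (number of regimes); probabilities $p_1,\dots,p_N\ge 0$ with $\sum_i p_i=1$; algorithmic losses $a_1,\dots,a_N\ge 0$ and unaided-human losses $h_1,\dots,h_N\ge0$; and a combining function $c:[0,\infty)^2\to\mathbb{R}$ satisfying $\min(a,h)\le c(a,h)\le\max(a,h)$ for all $a,h\ge0$, where $c(a_i,h_i)$ is the loss of the combined system in regime $i$. Write $A=\sum_i p_i a_i$ and $H=\sum_i p_i h_i$. The system exhibits complementarity if $\sum_{i=1}^N p_i\,c(a_i,h_i)<\min(A,H)$. A weighting function for $c$ is a function $s:[0,\infty)^2\to[0,1]$ with $c(a,h)=(1-s(a,h))a+s(a,h)h$ for all $a,h\ge0$. *)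

From mathcomp Require Import all_boot all_order all_algebra.
Set Implicit Arguments. Unset Strict Implicit. Unset Printing Implicit Defensive.
Import Order.TTheory GRing.Theory Num.Theory.
Local Open Scope ring_scope.

Definition expected_loss (R : realFieldType) (N : nat) (p x : 'I_N -> R) : R :=
  \sum_(i < N) p i * x i.

Definition complementarity (R : realFieldType) (N : nat) (p a h : 'I_N -> R)
  (c : R -> R -> R) : Prop :=
  \sum_(i < N) p i * c (a i) (h i)
    < Num.min (expected_loss p a) (expected_loss p h).

Definition weighting_function (R : realFieldType) (c s : R -> R -> R) : Prop :=
  forall x y : R, 0 <= x -> 0 <= y ->
    0 <= s x y <= 1 /\ c x y = (1 - s x y) * x + s x y * y.

From mathcomp Require Import all_boot all_order all_algebra ring lra.
Import Order.TTheory GRing.Theory Num.Theory.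
Local Open Scope ring_scope.

(* The combined loss is A plus the weighted gain sum_i p_i s_i (h_i - a_i) of
   deferring to the human; splitting h_i - a_i as (H - A) - (d_ai - d_hi)
   turns this gain into (H - A) E[s] - Cov(s, d_a - d_h), which the
   hypothesis makes negative, so the combined loss drops below A = min(A, H). *)

Lemma sum_weighted_gap {R : comRingType} {I : finType} (w x y : I -> R)
    (u v : R) :
  \sum_i w i * (y i - x i)
    = (v - u) * \sum_i w i - \sum_i w i * ((x i - u) - (y i - v)).
Proof. by rewrite mulr_sumr -sumrB; apply: eq_bigr => i _; ring. Qed.

Lemma expected_combined_loss {R : realFieldType} {N : nat} (p : 'I_N -> R)
    {a h : 'I_N -> R} {c s : R -> R -> R} :
  weighting_function c s -> (forall i, 0 <= a i) -> (forall i, 0 <= h i) ->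
  \sum_(i < N) p i * c (a i) (h i)
    = expected_loss p a + \sum_(i < N) p i * s (a i) (h i) * (h i - a i).
Proof.
move=> ws a_ge0 h_ge0; rewrite /expected_loss -big_split /=.
apply: eq_bigr => i _; have [_ ->] := ws _ _ (a_ge0 i) (h_ge0 i); ring.
Qed.

Theorem lemma7 (R : realFieldType) (N : nat) (p a h : 'I_N -> R)
  (c s : R -> R -> R) :
  (1 <= N)%N ->
  (forall i, 0 <= p i) ->
  \sum_(i < N) p i = 1 ->
  (forall i, 0 <= a i) ->
  (forall i, 0 <= h i) ->
  (forall x y : R, 0 <= x -> 0 <= y ->
     Num.min x y <= c x y <= Num.max x y) ->
  expected_loss p a <= expected_loss p h ->
  weighting_function c s ->
  (expected_loss p h - expected_loss p a) * (\sum_(i < N) p i * s (a i) (h i))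
    < \sum_(i < N) p i * s (a i) (h i) *
        ((a i - expected_loss p a) - (h i - expected_loss p h)) ->
  complementarity p a h c.
Proof.
move=> _ _ _ a_ge0 h_ge0 _ A_le_H ws cov_gt.
rewrite /complementarity (min_l A_le_H).
rewrite (expected_combined_loss p ws a_ge0 h_ge0).
rewrite (sum_weighted_gap (fun i => p i * s (a i) (h i)) a h
           (expected_loss p a) (expected_loss p h)) /=.
lra.
Qed.
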